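(* For every $\lambda>0$, the function $R_\lambda(e)=\partial_eF(\lambda,e)$ is strictly increasing and strictly concave on $I_\lambda$.
   Context: Let $\gamma>0$; let $a_1,\dots,a_p>0$ with weights $\omega_i>0$, $\sum_i\omega_i=1$, and $b_1,\dots,b_n>0$ with weights $\pi_j>0$, $\sum_j\pi_j=1$; put $a^*=\max_i a_i$, $b^*=\max_j b_j$. Define $G(e)=\sum_{j=1}^n\frac{b_j\pi_j}{1+\gamma b_j e}$, $J=\{e: e>-1/(\gamma b^* )\}$, and for $\lambda>0$, $I_\lambda=\{e\in J: G(e)<\lambda/a^*\}$. Define $F(\lambda,e)=e-\sum_{i=1}^p\frac{a_i\omega_i}{a_iG(e)-\lambda}$. *)

From Stdlib Require Import Reals.
Open Scope R_scope.

Fixpoint sumR (f : nat -> R) (n : nat) : R :=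
  match n with
  | O => 0
  | S k => sumR f k + f k
  end.

(* maxR f n = max_{k<n} f k  (for n >= 1 and positive values this is the max) *)
Fixpoint maxR (f : nat -> R) (n : nat) : R :=
  match n with
  | O => 0
  | S k => Rmax (maxR f k) (f k)
  end.

Definition Gfun (gamma : R) (n : nat) (b pi : nat -> R) (e : R) : R :=
  sumR (fun j => b j * pi j / (1 + gamma * b j * e)) n.

Definition inJ (gamma : R) (n : nat) (b : nat -> R) (e : R) : Prop :=
  e > - (1 / (gamma * maxR b n)).

Definition inI (gamma : R) (p n : nat) (a b pi : nat -> R) (lam e : R) : Prop :=
  inJ gamma n b e /\ Gfun gamma n b pi e < lam / maxR a p.

Definition Ffun (gamma : R) (p n : nat) (a omega b pi : nat -> R) (lam e : R) : R :=
  e - sumR (fun i => a i * omega i / (a i * Gfun gamma n b pi e - lam)) p.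

Definition strictly_increasing_on (D : R -> Prop) (f : R -> R) : Prop :=
  forall x y, D x -> D y -> x < y -> f x < f y.

Definition strictly_concave_on (D : R -> Prop) (f : R -> R) : Prop :=
  forall x y t, D x -> D y -> x <> y -> 0 < t < 1 ->
    t * f x + (1 - t) * f y < f (t * x + (1 - t) * y).

From Stdlib Require Import Reals Lra Lia Psatz.
Open Scope R_scope.

(* Differentiating, F'(lambda, e) = 1 - U(e) V(e) with
   U = -G' = sum_j gamma b_j^2 pi_j / (1 + gamma b_j e)^2  and
   V = sum_i a_i^2 omega_i / (lambda - a_i G(e))^2.
   On I_lambda, U is positive, strictly decreasing and strictly convex (each
   term is 1/x^2 along an increasing affine map), while V is positive,
   nonincreasing and convex: G is convex and nonincreasing, and s |-> 1/(lambda - a s)^2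
   is increasing and convex where a s < lambda.  For two positive decreasing
   functions the Chebyshev term (U x - U y)(V x - V y) is nonnegative, which
   makes the product UV strictly convex (and it is strictly decreasing), so
   R_lambda = 1 - UV is strictly increasing and strictly concave. *)

Lemma sumR_scal c f n : sumR (fun k => c * f k) n = c * sumR f n.
Proof. induction n as [|n IH]; simpl; [ring|]. rewrite IH; ring. Qed.

Lemma sumR_plus f g n : sumR (fun k => f k + g k) n = sumR f n + sumR g n.
Proof. induction n as [|n IH]; simpl; [ring|]. rewrite IH; ring. Qed.

Lemma sumR_opp f n : sumR (fun k => - f k) n = - sumR f n.
Proof. induction n as [|n IH]; simpl; [ring|]. rewrite IH; ring. Qed.

Lemma sumR_le f g n :
  (forall k, (k < n)%nat -> f k <= g k) -> sumR f n <= sumR g n.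
Proof.
  induction n as [|n IH]; simpl; intros H; [lra|].
  assert (H1 := IH ltac:(auto)). assert (H2 := H n ltac:(lia)). lra.
Qed.

Lemma sumR_lt f g n : (0 < n)%nat ->
  (forall k, (k < n)%nat -> f k < g k) -> sumR f n < sumR g n.
Proof.
  induction n as [|n IH]; simpl; intros Hn H; [lia|].
  destruct n as [|n].
  - assert (H0 := H 0%nat ltac:(lia)). simpl. lra.
  - assert (H1 := IH ltac:(lia) ltac:(auto)). assert (H2 := H (S n) ltac:(lia)). lra.
Qed.

Lemma sumR_pos f n : (0 < n)%nat ->
  (forall k, (k < n)%nat -> 0 < f k) -> 0 < sumR f n.
Proof.
  intros Hn H. replace 0 with (sumR (fun _ => 0) n) at 1.
  - apply sumR_lt; auto.
  - clear; induction n as [|n IH]; simpl; lra.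
Qed.

Lemma sumR_nonzero_length f n : sumR f n <> 0 -> (0 < n)%nat.
Proof. destruct n; simpl; [lra | lia]. Qed.

Lemma maxR_ge f n k : (k < n)%nat -> f k <= maxR f n.
Proof.
  induction n as [|n IH]; simpl; intros H; [lia|].
  destruct (Nat.eq_dec k n) as [->|]; [apply Rmax_r|].
  eapply Rle_trans; [apply IH; lia | apply Rmax_l].
Qed.

Lemma derivable_pt_lim_sumR (f : nat -> R -> R) (df : nat -> R) n e :
  (forall k, (k < n)%nat -> derivable_pt_lim (f k) e (df k)) ->
  derivable_pt_lim (fun x => sumR (fun k => f k x) n) e (sumR df n).
Proof.
  induction n as [|n IH]; simpl; intros H.
  - exact (derivable_pt_lim_const 0 e).
  - apply (derivable_pt_lim_plus (fun x => sumR (fun k => f k x) n) (f n)); auto.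
Qed.

Lemma derivable_pt_lim_const_div c g e l :
  derivable_pt_lim g e l -> g e <> 0 ->
  derivable_pt_lim (fun x => c / g x) e (- (c * l) / g e ^ 2).
Proof.
  intros Hg Hg0.
  replace (- (c * l) / g e ^ 2) with ((0 * g e - l * c) / (g e)²)
    by (unfold Rsqr; field; auto).
  exact (derivable_pt_lim_div (fct_cte c) g e 0 l (derivable_pt_lim_const c e) Hg Hg0).
Qed.

Definition convex_set (D : R -> Prop) : Prop :=
  forall x y t, D x -> D y -> 0 < t < 1 -> D (t * x + (1 - t) * y).

Definition convex_on (D : R -> Prop) (f : R -> R) : Prop :=
  forall x y t, D x -> D y -> 0 < t < 1 ->
    f (t * x + (1 - t) * y) <= t * f x + (1 - t) * f y.

Definition strictly_convex_on (D : R -> Prop) (f : R -> R) : Prop :=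
  forall x y t, D x -> D y -> x <> y -> 0 < t < 1 ->
    f (t * x + (1 - t) * y) < t * f x + (1 - t) * f y.

Definition nonincreasing_on (D : R -> Prop) (f : R -> R) : Prop :=
  forall x y, D x -> D y -> x <= y -> f y <= f x.

Definition strictly_decreasing_on (D : R -> Prop) (f : R -> R) : Prop :=
  forall x y, D x -> D y -> x < y -> f y < f x.

Lemma convex_set_gt K : convex_set (fun x => x > K).
Proof. intros x y t Hx Hy Ht. nra. Qed.

Lemma convex_set_sublevel D g c : convex_set D -> convex_on D g ->
  convex_set (fun x => D x /\ g x < c).
Proof.
  intros HD Hg x y t [Hx Hgx] [Hy Hgy] Ht. split; [auto|].
  assert (H := Hg x y t Hx Hy Ht). nra.
Qed.

Section SumsOfFunctions.
Variables (D : R -> Prop) (f : nat -> R -> R) (n : nat).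
Let sumf x := sumR (fun k => f k x) n.

Lemma convex_on_sumR :
  (forall k, (k < n)%nat -> convex_on D (f k)) -> convex_on D sumf.
Proof.
  intros Hf x y t Hx Hy Ht. unfold sumf. rewrite <- !sumR_scal, <- sumR_plus.
  apply sumR_le; intros k Hk; apply Hf; auto.
Qed.

Lemma strictly_convex_on_sumR : (0 < n)%nat ->
  (forall k, (k < n)%nat -> strictly_convex_on D (f k)) -> strictly_convex_on D sumf.
Proof.
  intros Hn Hf x y t Hx Hy Hxy Ht. unfold sumf. rewrite <- !sumR_scal, <- sumR_plus.
  apply sumR_lt; auto; intros k Hk; apply Hf; auto.
Qed.

Lemma nonincreasing_on_sumR :
  (forall k, (k < n)%nat -> nonincreasing_on D (f k)) -> nonincreasing_on D sumf.
Proof. intros Hf x y Hx Hy Hxy. apply sumR_le; intros k Hk; apply Hf; auto. Qed.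

Lemma strictly_decreasing_on_sumR : (0 < n)%nat ->
  (forall k, (k < n)%nat -> strictly_decreasing_on D (f k)) ->
  strictly_decreasing_on D sumf.
Proof. intros Hn Hf x y Hx Hy Hxy. apply sumR_lt; auto; intros k Hk; apply Hf; auto. Qed.

End SumsOfFunctions.

Lemma inv_convex_combination_lt x y t : 0 < x -> 0 < y -> x <> y -> 0 < t < 1 ->
  / (t * x + (1 - t) * y) < t / x + (1 - t) / y.
Proof.
  intros Hx Hy Hxy Ht. set (m := t * x + (1 - t) * y).
  assert (Hm : 0 < m) by (unfold m; nra).
  assert (Hgap : t / x + (1 - t) / y - / m = t * (1 - t) * (x - y) ^ 2 / (x * y * m))
    by (unfold m in *; field; lra).
  assert (0 < t * (1 - t) * (x - y) ^ 2 / (x * y * m)).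
  { assert (x - y <> 0) by lra. assert (0 < (x - y) ^ 2) by nra.
    apply Rdiv_lt_0_compat.
    - apply Rmult_lt_0_compat; [nra | assumption].
    - apply Rmult_lt_0_compat; [nra | assumption]. }
  lra.
Qed.

Lemma inv_convex_combination_le x y t : 0 < x -> 0 < y -> 0 < t < 1 ->
  / (t * x + (1 - t) * y) <= t / x + (1 - t) / y.
Proof.
  intros Hx Hy Ht. destruct (Req_dec x y) as [<-|Hxy].
  - right. replace (t * x + (1 - t) * x) with x by ring. field. lra.
  - left. apply inv_convex_combination_lt; auto.
Qed.

Lemma sq_convex_combination_le u v t : 0 < t < 1 ->
  (t * u + (1 - t) * v) ^ 2 <= t * u ^ 2 + (1 - t) * v ^ 2.
Proof.
  intros Ht.
  assert (t * u ^ 2 + (1 - t) * v ^ 2 - (t * u + (1 - t) * v) ^ 2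
          = t * (1 - t) * (u - v) ^ 2) by ring.
  assert (0 <= t * (1 - t) * (u - v) ^ 2).
  { apply Rmult_le_pos; [nra | apply pow2_ge_0]. }
  lra.
Qed.

Lemma inv_sq_convex_combination x y t : 0 < x -> 0 < y -> 0 < t < 1 ->
  (x <> y -> / (t * x + (1 - t) * y) ^ 2 < t / x ^ 2 + (1 - t) / y ^ 2) /\
  / (t * x + (1 - t) * y) ^ 2 <= t / x ^ 2 + (1 - t) / y ^ 2.
Proof.
  intros Hx Hy Ht. set (m := t * x + (1 - t) * y).
  assert (Hm : 0 < m) by (unfold m; nra).
  (* Jensen for 1/x, then for the square *)
  assert (Hsq := sq_convex_combination_le (/ x) (/ y) t Ht).
  replace (t / x ^ 2 + (1 - t) / y ^ 2) with (t * (/ x) ^ 2 + (1 - t) * (/ y) ^ 2)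
    by (field; lra).
  replace (/ m ^ 2) with ((/ m) ^ 2) by (field; lra).
  replace (t * / x + (1 - t) * / y) with (t / x + (1 - t) / y) in Hsq by (field; lra).
  assert (0 < / m) by (apply Rinv_0_lt_compat; lra).
  split.
  - intros Hxy. assert (L := inv_convex_combination_lt x y t Hx Hy Hxy Ht).
    fold m in L. nra.
  - assert (L := inv_convex_combination_le x y t Hx Hy Ht).
    fold m in L. nra.
Qed.

Section AffineReciprocals.
Variables (D : R -> Prop) (c d : R).
Hypothesis Hden : forall x, D x -> 0 < 1 + d * x.

Let affine_combination x y t :
  1 + d * (t * x + (1 - t) * y) = t * (1 + d * x) + (1 - t) * (1 + d * y).
Proof. ring. Qed.

Lemma convex_on_inv_affine : 0 <= c -> convex_on D (fun x => c / (1 + d * x)).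
Proof.
  intros Hc x y t Hx Hy Ht. rewrite affine_combination.
  assert (Hx' := Hden x Hx). assert (Hy' := Hden y Hy).
  assert (L := inv_convex_combination_le _ _ t Hx' Hy' Ht).
  replace (t * (c / (1 + d * x)) + (1 - t) * (c / (1 + d * y)))
    with (c * (t / (1 + d * x) + (1 - t) / (1 + d * y))) by (field; lra).
  unfold Rdiv at 1. apply Rmult_le_compat_l; assumption.
Qed.

Lemma nonincreasing_on_inv_affine : 0 <= c -> 0 <= d ->
  nonincreasing_on D (fun x => c / (1 + d * x)).
Proof.
  intros Hc Hd x y Hx Hy Hxy. assert (Hx' := Hden x Hx).
  unfold Rdiv. apply Rmult_le_compat_l; [assumption|].
  apply Rinv_le_contravar; [assumption | nra].
Qed.

Lemma strictly_convex_on_inv_sq_affine : 0 < c -> d <> 0 ->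
  strictly_convex_on D (fun x => c / (1 + d * x) ^ 2).
Proof.
  intros Hc Hd x y t Hx Hy Hxy Ht. rewrite affine_combination.
  assert (Hx' := Hden x Hx). assert (Hy' := Hden y Hy).
  assert (Hne : 1 + d * x <> 1 + d * y).
  { intros E. apply Hxy. apply (Rmult_eq_reg_l d); [lra | assumption]. }
  destruct (inv_sq_convex_combination _ _ t Hx' Hy' Ht) as [L _].
  replace (t * (c / (1 + d * x) ^ 2) + (1 - t) * (c / (1 + d * y) ^ 2))
    with (c * (t / (1 + d * x) ^ 2 + (1 - t) / (1 + d * y) ^ 2))
    by (field; lra).
  unfold Rdiv at 1. apply Rmult_lt_compat_l; auto.
Qed.

Lemma strictly_decreasing_on_inv_sq_affine : 0 < c -> 0 < d ->
  strictly_decreasing_on D (fun x => c / (1 + d * x) ^ 2).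
Proof.
  intros Hc Hd x y Hx Hy Hxy. assert (Hx' := Hden x Hx).
  assert (d * x < d * y) by (apply Rmult_lt_compat_l; assumption).
  unfold Rdiv. apply Rmult_lt_compat_l; [assumption|].
  apply Rinv_lt_contravar; [|nra].
  apply Rmult_lt_0_compat; apply pow_lt; [assumption | nra].
Qed.

End AffineReciprocals.

Section ReciprocalSquareOfConcave.
Variables (D : R -> Prop) (g : R -> R) (c a lam : R).
Hypotheses (Hc : 0 <= c) (Ha : 0 <= a).
Hypothesis Hden : forall x, D x -> 0 < lam - a * g x.

Lemma convex_on_inv_sq_sub : convex_set D -> convex_on D g ->
  convex_on D (fun x => c / (lam - a * g x) ^ 2).
Proof.
  intros HD Hg x y t Hx Hy Ht.
  set (z := t * x + (1 - t) * y).
  assert (Hz := Hden z (HD x y t Hx Hy Ht)).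
  assert (Hx' := Hden x Hx). assert (Hy' := Hden y Hy).
  set (X := lam - a * g x) in *. set (Y := lam - a * g y) in *.
  set (Z := lam - a * g z) in *.
  assert (HZ : t * X + (1 - t) * Y <= Z).
  { assert (a * g z <= a * (t * g x + (1 - t) * g y)).
    { apply Rmult_le_compat_l; [assumption | apply Hg; assumption]. }
    unfold X, Y, Z. lra. }
  assert (Hm : 0 < t * X + (1 - t) * Y) by nra.
  destruct (inv_sq_convex_combination _ _ t Hx' Hy' Ht) as [_ L].
  assert (/ Z ^ 2 <= / (t * X + (1 - t) * Y) ^ 2).
  { apply Rinv_le_contravar; [apply pow_lt; assumption | nra]. }
  replace (t * (c / X ^ 2) + (1 - t) * (c / Y ^ 2))
    with (c * (t / X ^ 2 + (1 - t) / Y ^ 2)) by (field; lra).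
  unfold Rdiv at 1. apply Rmult_le_compat_l; lra.
Qed.

Lemma nonincreasing_on_inv_sq_sub : nonincreasing_on D g ->
  nonincreasing_on D (fun x => c / (lam - a * g x) ^ 2).
Proof.
  intros Hg x y Hx Hy Hxy. assert (Hx' := Hden x Hx).
  assert (a * g y <= a * g x) by (apply Rmult_le_compat_l; auto).
  unfold Rdiv. apply Rmult_le_compat_l; [assumption|].
  apply Rinv_le_contravar; [apply pow_lt; assumption | nra].
Qed.

End ReciprocalSquareOfConcave.

Section ProductOfDecreasingConvex.
Variables (D : R -> Prop) (f g : R -> R).
Hypotheses (Hfpos : forall x, D x -> 0 < f x) (Hgpos : forall x, D x -> 0 < g x).
Hypotheses (Hfdec : strictly_decreasing_on D f) (Hgdec : nonincreasing_on D g).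

Lemma strictly_decreasing_on_mul : strictly_decreasing_on D (fun x => f x * g x).
Proof.
  intros x y Hx Hy Hxy.
  assert (f y < f x) by auto. assert (g y <= g x) by (apply Hgdec; auto; lra).
  assert (0 < f y) by auto. assert (0 < g y) by auto. nra.
Qed.

Let similarly_ordered x y : D x -> D y -> 0 <= (f x - f y) * (g x - g y).
Proof.
  intros Hx Hy. destruct (Rlt_or_le x y) as [Hxy|Hyx].
  - assert (f y < f x) by auto. assert (g y <= g x) by (apply Hgdec; auto; lra). nra.
  - destruct (Req_dec x y) as [->|Hne]; [nra|].
    assert (f x < f y) by (apply Hfdec; auto; lra). assert (g x <= g y) by auto. nra.
Qed.

Lemma strictly_convex_on_mul : convex_set D ->
  strictly_convex_on D f -> convex_on D g -> strictly_convex_on D (fun x => f x * g x).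
Proof.
  intros HD Hfcvx Hgcvx x y t Hx Hy Hxy Ht.
  assert (Hz := HD x y t Hx Hy Ht). set (z := t * x + (1 - t) * y) in *.
  assert (Hf := Hfcvx x y t Hx Hy Hxy Ht). assert (Hg := Hgcvx x y t Hx Hy Ht).
  assert (Hsim := similarly_ordered x y Hx Hy). fold z in Hf, Hg.
  assert (0 < f x) by auto. assert (0 < f y) by auto. assert (0 < g z) by auto.
  set (fm := t * f x + (1 - t) * f y) in *. set (gm := t * g x + (1 - t) * g y) in *.
  assert (S1 : f z * g z < fm * g z) by (apply Rmult_lt_compat_r; assumption).
  assert (S2 : fm * g z <= fm * gm) by (apply Rmult_le_compat_l; [unfold fm; nra | assumption]).
  assert (E : fm * gm = t * (f x * g x) + (1 - t) * (f y * g y)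
                        - t * (1 - t) * ((f x - f y) * (g x - g y))) by (unfold fm, gm; ring).
  assert (0 <= t * (1 - t) * ((f x - f y) * (g x - g y))) by (apply Rmult_le_pos; nra).
  lra.
Qed.

End ProductOfDecreasingConvex.

Section OneMinus.
Variables (D : R -> Prop) (f g : R -> R).
Hypothesis Hfg : forall x, D x -> g x = 1 - f x.

Lemma strictly_increasing_on_one_sub :
  strictly_decreasing_on D f -> strictly_increasing_on D g.
Proof. intros Hf x y Hx Hy Hxy. rewrite !Hfg by assumption. assert (f y < f x) by auto. lra. Qed.

Lemma strictly_concave_on_one_sub : convex_set D ->
  strictly_convex_on D f -> strictly_concave_on D g.
Proof.
  intros HD Hf x y t Hx Hy Hxy Ht. rewrite !Hfg by auto.
  assert (H := Hf x y t Hx Hy Hxy Ht). lra.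
Qed.

End OneMinus.

Lemma one_add_mul_pos d dmax e : 0 < d <= dmax -> e > - (1 / dmax) -> 0 < 1 + d * e.
Proof.
  intros Hd He. destruct (Rle_lt_dec 0 e) as [He0|He0]; [nra|].
  assert (dmax * e > -1).
  { replace (-1) with (dmax * - (1 / dmax)) by (field; lra).
    apply Rmult_gt_compat_l; lra. }
  nra.
Qed.

Lemma sub_mul_pos lam a amax x : 0 < a <= amax -> 0 <= x -> x < lam / amax ->
  0 < lam - a * x.
Proof.
  intros Ha Hx Hlt. apply Rmult_lt_compat_l with (r := amax) in Hlt; [|lra].
  replace (amax * (lam / amax)) with lam in Hlt by (field; lra). nra.
Qed.

Lemma derivable_pt_lim_affine c d e : derivable_pt_lim (fun x => c + d * x) e d.
Proof.
  assert (H := derivable_pt_lim_plus (fct_cte c) (mult_real_fct d id) e _ _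
    (derivable_pt_lim_const c e) (derivable_pt_lim_scal id d e 1 (derivable_pt_lim_id e))).
  replace (0 + d * 1) with d in H by ring. exact H.
Qed.

Section Model.
Variables (gamma : R) (p n : nat) (a omega b pi : nat -> R) (lam : R).
Hypothesis Hgamma : 0 < gamma.
Hypotheses (Ha : forall i, (i < p)%nat -> 0 < a i)
           (Homega : forall i, (i < p)%nat -> 0 < omega i)
           (Homega1 : sumR omega p = 1).
Hypotheses (Hb : forall j, (j < n)%nat -> 0 < b j)
           (Hpi : forall j, (j < n)%nat -> 0 < pi j)
           (Hpi1 : sumR pi n = 1).

Local Notation G := (Gfun gamma n b pi).
Local Notation J := (inJ gamma n b).
Local Notation I := (inI gamma p n a b pi lam).
Local Notation F := (Ffun gamma p n a omega b pi lam).

Definition Ufun (e : R) : R :=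
  sumR (fun j => b j * pi j * (gamma * b j) / (1 + gamma * b j * e) ^ 2) n.

Definition Vfun (e : R) : R :=
  sumR (fun i => a i * omega i * a i / (lam - a i * G e) ^ 2) p.

Lemma n_pos : (0 < n)%nat.
Proof. apply (sumR_nonzero_length pi); lra. Qed.

Lemma p_pos : (0 < p)%nat.
Proof. apply (sumR_nonzero_length omega); lra. Qed.

Lemma inJ_denominator_pos e j : J e -> (j < n)%nat -> 0 < 1 + gamma * b j * e.
Proof.
  intros He Hj. apply (one_add_mul_pos _ (gamma * maxR b n)); [|exact He].
  split; [apply Rmult_lt_0_compat; auto|].
  apply Rmult_le_compat_l; [lra | apply maxR_ge; assumption].
Qed.

Lemma Gfun_nonneg e : J e -> 0 <= G e.
Proof.
  intros He. left. apply sumR_pos; [apply n_pos|]. intros j Hj.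
  assert (Hbj := Hb j Hj). assert (Hpj := Hpi j Hj).
  assert (Hd := inJ_denominator_pos e j He Hj).
  apply Rdiv_lt_0_compat; [nra | assumption].
Qed.

Lemma inI_denominator_pos e i : I e -> (i < p)%nat -> 0 < lam - a i * G e.
Proof.
  intros [HJ HG] Hi. apply (sub_mul_pos _ _ (maxR a p)); auto using Gfun_nonneg.
  split; [auto | apply maxR_ge; assumption].
Qed.

Lemma Gfun_convex : convex_on J G.
Proof.
  apply convex_on_sumR. intros j Hj. apply convex_on_inv_affine.
  - intros e He. apply inJ_denominator_pos; assumption.
  - assert (Hbj := Hb j Hj). assert (Hpj := Hpi j Hj). nra.
Qed.

Lemma Gfun_nonincreasing : nonincreasing_on J G.
Proof.
  apply nonincreasing_on_sumR. intros j Hj.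
  assert (Hbj := Hb j Hj). assert (Hpj := Hpi j Hj).
  apply nonincreasing_on_inv_affine; [| nra | nra].
  intros e He. apply inJ_denominator_pos; assumption.
Qed.

Lemma convex_set_inI : convex_set I.
Proof. apply convex_set_sublevel; [apply convex_set_gt | apply Gfun_convex]. Qed.

Lemma Ufun_pos e : J e -> 0 < Ufun e.
Proof.
  intros He. apply sumR_pos; [apply n_pos|]. intros j Hj.
  assert (Hbj := Hb j Hj). assert (Hpj := Hpi j Hj).
  assert (Hd := inJ_denominator_pos e j He Hj).
  apply Rdiv_lt_0_compat; [| apply pow_lt; assumption].
  apply Rmult_lt_0_compat; nra.
Qed.

Lemma Vfun_pos e : I e -> 0 < Vfun e.
Proof.
  intros He. apply sumR_pos; [apply p_pos|]. intros i Hi.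
  assert (Hai := Ha i Hi). assert (Hoi := Homega i Hi).
  assert (Hd := inI_denominator_pos e i He Hi).
  apply Rdiv_lt_0_compat; [| apply pow_lt; assumption].
  apply Rmult_lt_0_compat; nra.
Qed.

Lemma Ufun_strictly_decreasing : strictly_decreasing_on J Ufun.
Proof.
  apply strictly_decreasing_on_sumR; [apply n_pos|]. intros j Hj.
  assert (Hbj := Hb j Hj). assert (Hpj := Hpi j Hj).
  apply strictly_decreasing_on_inv_sq_affine; [| apply Rmult_lt_0_compat; nra | nra].
  intros e He. apply inJ_denominator_pos; assumption.
Qed.

Lemma Ufun_strictly_convex : strictly_convex_on J Ufun.
Proof.
  apply strictly_convex_on_sumR; [apply n_pos|]. intros j Hj.
  assert (Hbj := Hb j Hj). assert (Hpj := Hpi j Hj).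
  apply strictly_convex_on_inv_sq_affine; [| apply Rmult_lt_0_compat; nra | nra].
  intros e He. apply inJ_denominator_pos; assumption.
Qed.

Lemma Vfun_nonincreasing : nonincreasing_on I Vfun.
Proof.
  apply nonincreasing_on_sumR. intros i Hi.
  assert (Hai := Ha i Hi). assert (Hoi := Homega i Hi).
  apply nonincreasing_on_inv_sq_sub; [nra | lra | |].
  - intros e He. apply inI_denominator_pos; assumption.
  - intros x y Hx Hy. apply Gfun_nonincreasing; [apply Hx | apply Hy].
Qed.

Lemma Vfun_convex : convex_on I Vfun.
Proof.
  apply convex_on_sumR. intros i Hi.
  assert (Hai := Ha i Hi). assert (Hoi := Homega i Hi).
  apply convex_on_inv_sq_sub; [nra | lra | | apply convex_set_inI |].
  - intros e He. apply inI_denominator_pos; assumption.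
  - intros x y t Hx Hy. apply Gfun_convex; [apply Hx | apply Hy].
Qed.

Lemma Ufun_mul_Vfun_strictly_decreasing :
  strictly_decreasing_on I (fun e => Ufun e * Vfun e).
Proof.
  apply strictly_decreasing_on_mul; [| exact Vfun_pos | | exact Vfun_nonincreasing].
  - intros e He. apply Ufun_pos, He.
  - intros x y Hx Hy. apply Ufun_strictly_decreasing; [apply Hx | apply Hy].
Qed.

Lemma Ufun_mul_Vfun_strictly_convex :
  strictly_convex_on I (fun e => Ufun e * Vfun e).
Proof.
  apply strictly_convex_on_mul;
    [| exact Vfun_pos | | exact Vfun_nonincreasing | exact convex_set_inI | | exact Vfun_convex].
  - intros e He. apply Ufun_pos, He.
  - intros x y Hx Hy. apply Ufun_strictly_decreasing; [apply Hx | apply Hy].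
  - intros x y t Hx Hy. apply Ufun_strictly_convex; [apply Hx | apply Hy].
Qed.

Lemma derivable_pt_lim_Gfun e : J e -> derivable_pt_lim G e (- Ufun e).
Proof.
  intros He. unfold Gfun, Ufun. rewrite <- sumR_opp.
  apply (derivable_pt_lim_sumR (fun j x => b j * pi j / (1 + gamma * b j * x))).
  intros j Hj. assert (Hd := inJ_denominator_pos e j He Hj).
  replace (- (b j * pi j * (gamma * b j) / (1 + gamma * b j * e) ^ 2))
    with (- (b j * pi j * (gamma * b j)) / (1 + gamma * b j * e) ^ 2) by (field; lra).
  apply (derivable_pt_lim_const_div _ (fun x => 1 + gamma * b j * x)); [|lra].
  apply derivable_pt_lim_affine.
Qed.

Lemma derivable_pt_lim_Ffun e : I e -> derivable_pt_lim F e (1 - Ufun e * Vfun e).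
Proof.
  intros He. unfold Ffun, Vfun. rewrite <- sumR_scal.
  apply (derivable_pt_lim_minus id); [apply derivable_pt_lim_id|].
  apply (derivable_pt_lim_sumR (fun i x => a i * omega i / (a i * G x - lam))).
  intros i Hi. assert (Hd := inI_denominator_pos e i He Hi).
  replace (Ufun e * (a i * omega i * a i / (lam - a i * G e) ^ 2))
    with (- (a i * omega i * (a i * - Ufun e - 0)) / (a i * G e - lam) ^ 2) by (field; lra).
  apply (derivable_pt_lim_const_div _ (fun x => a i * G x - lam)); [|lra].
  apply (derivable_pt_lim_minus (mult_real_fct (a i) G) (fct_cte lam)).
  - apply derivable_pt_lim_scal, derivable_pt_lim_Gfun, He.
  - apply derivable_pt_lim_const.
Qed.

End Model.

Theorem proposition3p14
  (gamma : R) (p n : nat) (a omega b pi : nat -> R)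
  (Hgamma : 0 < gamma)
  (Ha : forall i, (i < p)%nat -> 0 < a i)
  (Homega : forall i, (i < p)%nat -> 0 < omega i)
  (Homega1 : sumR omega p = 1)
  (Hb : forall j, (j < n)%nat -> 0 < b j)
  (Hpi : forall j, (j < n)%nat -> 0 < pi j)
  (Hpi1 : sumR pi n = 1) :
  forall lam : R, 0 < lam ->
    (forall e, inI gamma p n a b pi lam e ->
       exists l, derivable_pt_lim (Ffun gamma p n a omega b pi lam) e l) /\
    (forall Rl : R -> R,
       (forall e, inI gamma p n a b pi lam e ->
          derivable_pt_lim (Ffun gamma p n a omega b pi lam) e (Rl e)) ->
       strictly_increasing_on (inI gamma p n a b pi lam) Rl /\
       strictly_concave_on (inI gamma p n a b pi lam) Rl).
Proof.
  intros lam _.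
  set (UV e := Ufun gamma n b pi e * Vfun gamma p n a omega b pi lam e).
  assert (HF : forall e, inI gamma p n a b pi lam e ->
                 derivable_pt_lim (Ffun gamma p n a omega b pi lam) e (1 - UV e))
    by (intros e He; eapply derivable_pt_lim_Ffun; eauto).
  split; [intros e He; eexists; exact (HF e He)|].
  intros Rl HRl.
  assert (HR : forall e, inI gamma p n a b pi lam e -> Rl e = 1 - UV e)
    by (intros e He; exact (uniqueness_limite _ _ _ _ (HRl e He) (HF e He))).
  split.
  - apply (strictly_increasing_on_one_sub _ UV _ HR).
    eapply Ufun_mul_Vfun_strictly_decreasing; eauto.
  - apply (strictly_concave_on_one_sub _ UV _ HR).
    + eapply convex_set_inI; eauto.
    + eapply Ufun_mul_Vfun_strictly_convex; eauto.
Qed.
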